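(* Let $q$ be a distribution over $[n]$, let $S\subseteq[n]$ be nonempty with $R(q,S)\ge1$, let $0\le\varepsilon_1<\varepsilon_2$ and $\delta>0$. Then \[ \mathsf{SC}(q,\varepsilon_1,\varepsilon_2,\delta)\ \ge\ \frac{4}{q(S)}\cdot \mathsf{SC}\Big(\mathrm{Unif}_{R(q,S)},\ \frac{4\varepsilon_1}{q(S)},\ \frac{4\varepsilon_2}{q(S)},\ \delta\Big). \]
   Context: For a distribution $q$ over a finite domain, $0\le\varepsilon_1<\varepsilon_2$ and $\delta>0$, $\mathsf{SC}(q,\varepsilon_1,\varepsilon_2,\delta)$ denotes the minimum $m$ such that some tester, given $\mathrm{Poi}(m)$ i.i.d. samples (Poissonized sampling) from an unknown distribution $p$ on the same domain and the full description of $q$, correctly distinguishes $\|p-q\|_1\le\varepsilon_1$ from $\|p-q\|_1\ge\varepsilon_2$ with probability at least $1-\delta$ for every such $p$. For $S\subseteq[n]$, $q(S)=\sum_{i\in S}q_i$, $M(q,S)=\max_{i\in S}q_i$ and $R(q,S)=\big\lfloor \frac{q(S)}{2M(q,S)}\big\rfloor$. $\mathrm{Unif}_t$ is the uniform distribution on $[t]$. *)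

From HB Require Import structures.
From mathcomp Require Import all_boot all_order all_algebra.
From mathcomp Require Import all_classical all_reals all_analysis.
Set Implicit Arguments. Unset Strict Implicit. Unset Printing Implicit Defensive.
Import Order.TTheory GRing.Theory Num.Theory.
Local Open Scope classical_set_scope.
Local Open Scope ring_scope.

Section Defs.
Variable R : realType.

Definition is_distr (n : nat) (p : 'I_n -> R) : Prop :=
  (forall i, 0 <= p i) /\ \sum_(i < n) p i = 1.

Definition l1dist (n : nat) (p q : 'I_n -> R) : R := \sum_(i < n) `|p i - q i|.

(* A (possibly randomized) tester: for each number k of samples and each
   sample sequence of length k, the probability of answering "close". *)
Definition tester (n : nat) := forall k : nat, k.-tuple 'I_n -> R.

Definition is_tester (n : nat) (T : tester n) : Prop :=
  forall k (t : k.-tuple 'I_n), 0 <= T k t <= 1.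

(* Probability that T answers "close" when given Poi(m) i.i.d. samples from p:
   sum_k P[Poi(m) = k] * sum_{t in [n]^k} (prod_j p(t_j)) * T(t). *)
Definition accept_prob (n : nat) (T : tester n) (p : 'I_n -> R) (m : R) : \bar R :=
  (\sum_(0 <= k <oo)
     ((expR (- m) * m ^+ k / (k`!)%:R *
       \sum_(t : k.-tuple 'I_n) ((\prod_(j < k) p (tnth t j)) * T k t))%:E))%E.

Definition solves (n : nat) (q : 'I_n -> R) (e1 e2 d m : R) : Prop :=
  exists T : tester n, is_tester T /\
    forall p : 'I_n -> R, is_distr p ->
      (l1dist p q <= e1 -> ((1 - d)%:E <= accept_prob T p m)%E) /\
      (e2 <= l1dist p q -> (accept_prob T p m <= d%:E)%E).

(* Sample complexity SC(q, e1, e2, d): the least (infimum) m >= 0 for which a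
   tester exists; +oo if there is none. *)
Definition SC (n : nat) (q : 'I_n -> R) (e1 e2 d : R) : \bar R :=
  ereal_inf [set m%:E | m in [set m : R | 0 <= m /\ solves q e1 e2 d m]].

Definition qmass (n : nat) (q : 'I_n -> R) (S : {set 'I_n}) : R :=
  \sum_(i in S) q i.
Definition qmax (n : nat) (q : 'I_n -> R) (S : {set 'I_n}) : R :=
  \big[Num.max/0]_(i in S) q i.
Definition Rqs (n : nat) (q : 'I_n -> R) (S : {set 'I_n}) : nat :=
  Num.truncn (qmass q S / (2 * qmax q S)).

Definition unif (t : nat) : 'I_t -> R := fun _ => 1 / t%:R.

End Defs.

From HB Require Import structures.
From mathcomp Require Import all_boot all_order all_algebra.
From mathcomp Require Import all_classical all_reals all_analysis.
From mathcomp Require Import ring lra.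
Import Order.TTheory GRing.Theory Num.Theory.
Local Open Scope ring_scope.
Set Implicit Arguments. Unset Strict Implicit. Unset Printing Implicit Defensive.

(* Put r = R(q,S) and c = q(S)/4.  We carve out of q a sub-measure b <= q and a
   map g : [n] -> [r] such that every block g^-1(j) carries b-mass exactly c/r
   (Section Blocks: greedily cut S into r pieces of q-mass >= c/r, then scale).
   A distribution p' on [r] is embedded as
       embed p' = (q - b) + sum_j p'(j) * (r * b restricted to g^-1(j)),
   the mixture "with probability 1-c draw from (q-b)/(1-c); with probability c
   draw a label j ~ p', then a point of block j"; it satisfies
   ||embed p' - q||_1 = c ||p' - Unif_r||_1 (Section Embedding).
   Poisson splitting turns Poi(m) draws of the mixture into Poi(cm) labelled
   draws, i.e. samples of p', plus independent unlabelled draws.  Hence a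
   tester T for q with Poi(m) samples yields a tester for Unif_r with Poi(cm)
   samples: given the labels, it returns the acceptance probability of T
   averaged over everything else (Sections Mixture, Poisson, Simulation;
   theorem sim_accept).  So m samples for q give c*m samples for Unif_r with
   thresholds e/c = 4e/q(S) (lemma reduction), and the main theorem follows by
   taking infima. *)

Lemma sum_tuple0 (V : nmodType) (Y : finType) (F : 0.-tuple Y -> V) :
  \sum_(t : 0.-tuple Y) F t = F [tuple].
Proof. by rewrite (big_pred1 [tuple]) // => t /=; apply/esym/eqP; exact: tuple0. Qed.

Lemma sum_tuple_cons (V : nmodType) (Y : finType) k (F : k.+1.-tuple Y -> V) :
  \sum_(t : k.+1.-tuple Y) F t =
  \sum_(y : Y) \sum_(t : k.-tuple Y) F [tuple of y :: t].
Proof.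
rewrite pair_big /=.
rewrite (reindex (fun p : Y * k.-tuple Y => [tuple of p.1 :: p.2])) /=.
  by apply: eq_bigr => -[x t].
exists (fun t : k.+1.-tuple Y => (thead t, [tuple of behead t])).
  by move=> [x t] _ /=; congr pair; apply: val_inj.
by move=> t _ /=; rewrite [RHS]tuple_eta; apply: val_inj.
Qed.

(* A sequence of length at most k is exactly one tuple of some length k' <= k. *)
Lemma sum_tuples_of_seq (V : pzSemiRingType) (Y : finType) k (s : seq Y) :
  (size s <= k)%N ->
  \sum_(k' < k.+1) \sum_(y : k'.-tuple Y) ((s == val y)%:R : V) = 1.
Proof.
move=> Hs; have Hs' : (size s < k.+1)%N by [].
rewrite (bigD1 (Ordinal Hs')) //= [X in _ + X]big1 ?addr0; last first.
  move=> k' Hk; apply: big1 => y _.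
  case: eqP => // E; move: Hk; rewrite -val_eqE /= E size_tuple eqxx //.
rewrite (bigD1 (in_tuple s)) //= eqxx big1 ?addr0 // => y Hy.
case: eqP => // E; move/eqP: Hy; case; apply: val_inj => /=; by rewrite -E.
Qed.

Section Mixture.
Variables (R : realType) (n r : nat).

(* One draw of the mixture: [inl i] is an unlabelled point i, [inr (j, i)] a
   point i drawn from block j and carrying the label j. *)
Definition sample := ('I_n + 'I_r * 'I_n)%type.

Definition point (x : sample) : 'I_n :=
  match x with inl i => i | inr (_, i) => i end.

Fixpoint labels (s : seq sample) : seq 'I_r :=
  match s with
  | [::] => [::]
  | inl _ :: s' => labels s'
  | inr (j, _) :: s' => j :: labels s'
  end.

Lemma size_labels s : (size (labels s) <= size s)%N.
Proof. by elim: s => [|[x|[j x]] s IH] //=; rewrite ?ltnS // leqW. Qed.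

(* f is the unlabelled part and h j the (unnormalised) block j of the mixture. *)
Variables (f : 'I_n -> R) (h : 'I_r -> 'I_n -> R).

Definition sweight (x : sample) : R :=
  match x with inl i => f i | inr (j, i) => h j i end.

Definition mix_weight (p' : 'I_r -> R) (x : sample) : R :=
  match x with inl i => f i | inr (j, i) => p' j * h j i end.

Definition mixture (p' : 'I_r -> R) (i : 'I_n) : R :=
  \sum_(x | point x == i) mix_weight p' x.

Lemma mixtureE p' i : mixture p' i = f i + \sum_j p' j * h j i.
Proof.
rewrite /mixture big_sumType /=; congr (_ + _); first by rewrite (big_pred1 i).
transitivity (\sum_(p : 'I_r * 'I_n | p.2 == i) p' p.1 * h p.1 p.2).
  by apply: eq_big => -[j i'].
rewrite -(pair_big_dep xpredT (fun _ i' => i' == i) (fun j i' => p' j * h j i')).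
by apply: eq_bigr => j _; rewrite (big_pred1 i).
Qed.

Lemma mix_weight_prod p' (s : seq sample) :
  \prod_(x <- s) mix_weight p' x =
  (\prod_(j <- labels s) p' j) * \prod_(x <- s) sweight x.
Proof.
elim: s => [|[i|[j i]] s IH] /=; first by rewrite !big_nil mulr1.
  by rewrite !big_cons IH mulrCA.
by rewrite !big_cons IH /= !mulrA; congr (_ * _); rewrite mulrAC.
Qed.

Lemma sum_mixture_tuples p' k (F : k.-tuple 'I_n -> R) :
  \sum_(t : k.-tuple 'I_n) (\prod_(i <- t) mixture p' i) * F t =
  \sum_(w : k.-tuple sample) (\prod_(x <- w) mix_weight p' x) * F (map_tuple point w).
Proof.
elim: k F => [|k IH] F.
  by rewrite !sum_tuple0 !big_nil; congr (_ * F _); exact: val_inj.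
rewrite !sum_tuple_cons.
transitivity (\sum_(i : 'I_n) \sum_(x | point x == i)
   mix_weight p' x * \sum_(w : k.-tuple sample) (\prod_(y <- w) mix_weight p' y) *
       F [tuple of i :: map_tuple point w]).
  apply: eq_bigr => i _.
  under eq_bigr do rewrite big_cons -mulrA.
  rewrite -big_distrr /= (IH (fun t => F [tuple of i :: t])) big_distrl /=.
  by apply: eq_bigr => x _.
rewrite [RHS](partition_big point xpredT) //=.
apply: eq_bigr => i _; apply: eq_bigr => x /eqP <-.
rewrite big_distrr /=; apply: eq_bigr => w _.
rewrite big_cons -mulrA; congr (_ * (_ * F _)); exact: val_inj.
Qed.

Lemma sum_by_labels k (p' : 'I_r -> R) (F : k.-tuple sample -> R) :
  \sum_(w : k.-tuple sample) (\prod_(j <- labels w) p' j) * F w =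
  \sum_(k' < k.+1) \sum_(y : k'.-tuple 'I_r)
     (\prod_(j <- y) p' j) * \sum_(w : k.-tuple sample | labels w == y) F w.
Proof.
transitivity (\sum_(k' < k.+1) \sum_(y : k'.-tuple 'I_r) \sum_(w : k.-tuple sample)
   ((labels w == y)%:R * ((\prod_(j <- labels w) p' j) * F w))); last first.
  apply: eq_bigr => k' _; apply: eq_bigr => y _.
  rewrite big_distrr [RHS]big_mkcond /=; apply: eq_bigr => w _.
  by case: eqP => [->|_]; rewrite ?mul1r ?mul0r ?mulr0.
under [RHS]eq_bigr do rewrite exchange_big /=.
rewrite [RHS]exchange_big /=; apply: eq_bigr => w _.
set G := \prod_(j <- labels w) p' j * F w.
transitivity ((\sum_(k' < k.+1) \sum_(y : k'.-tuple 'I_r)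
                 ((labels w == val y)%:R : R)) * G); last first.
  by rewrite big_distrl; apply: eq_bigr => k' _; rewrite big_distrl.
rewrite sum_tuples_of_seq ?mul1r //.
exact: leq_trans (size_labels _) (eq_leq (size_tuple w)).
Qed.

Definition label_mass k (y : seq 'I_r) : R :=
  \sum_(w : k.-tuple sample | labels w == y) \prod_(x <- w) sweight x.

Variable c : R.
Hypotheses (sum_f : \sum_i f i = 1 - c) (sum_h : forall j, \sum_i h j i = c).

(* One more draw is either unlabelled (mass 1-c) or carries the next label (mass c). *)
Lemma label_mass_cons k y :
  label_mass k.+1 y =
  (1 - c) * label_mass k y + (if y is j0 :: y' then c * label_mass k y' else 0).
Proof.
rewrite /label_mass big_mkcond sum_tuple_cons big_sumType /=.
transitivity ((1 - c) * label_mass k y +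
   \sum_(p : 'I_r * 'I_n) h p.1 p.2 *
      (if y is j0 :: y' then (p.1 == j0)%:R * label_mass k y' else 0)).
  congr (_ + _).
    rewrite -sum_f big_distrl /=; apply: eq_bigr => i _.
    rewrite /label_mass big_distrr /= [RHS]big_mkcond /=.
    by apply: eq_bigr => w _; rewrite big_cons; case: ifP; rewrite ?mulr0.
  apply: eq_bigr => -[j i] _ /=.
  case: y => [|j0 y']; first by rewrite mulr0; apply: big1 => w _.
  rewrite /label_mass big_distrr /= big_distrr /= [RHS]big_mkcond /=.
  apply: eq_bigr => w _; rewrite big_cons /= eqseq_cons.
  by case: (j == j0); case: (labels w == y'); rewrite ?mul1r ?mul0r ?mulr0.
case: y => [|j0 y'] /=; first by rewrite big1 // => ? _; rewrite mulr0.
rewrite -(pair_big xpredT xpredT (fun j i => h j i * ((j == j0)%:R * label_mass k y'))).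
rewrite (bigD1 j0) //= [X in _ + (_ + X)]big1 ?addr0; last first.
  by move=> j /negbTE ->; apply: big1 => i _; rewrite mul0r mulr0.
by rewrite eqxx mul1r -big_distrl /= sum_h.
Qed.

Lemma label_massE k (y : seq 'I_r) :
  label_mass k y = 'C(k, size y)%:R * c ^+ size y * (1 - c) ^+ (k - size y).
Proof.
elim: k y => [|k IH] y.
  rewrite /label_mass big_mkcond sum_tuple0 /= big_nil.
  by case: y => [|j y] /=; rewrite ?bin0 ?mul1r ?expr0 // bin0n mul0r mul0r.
rewrite label_mass_cons; case: y => [|j0 y'] /=.
  by rewrite addr0 IH /= !bin0 !subn0 exprS; ring.
rewrite !IH /= binS natrD subSS; set s := size y'.
have [lt|ge] := ltnP s k.
  have -> : (k - s = (k - s.+1).+1)%N by rewrite subnS prednK // subn_gt0.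
  by rewrite !exprS; ring.
rewrite (bin_small (n:=k)) ?ltnS // (_ : (k - s)%N = 0%N); last first.
  by apply/eqP; rewrite subn_eq0.
rewrite exprS; ring.
Qed.

End Mixture.

Section Poisson.
Variable R : realType.

Definition poisson (m : R) (k : nat) : R := expR (- m) * m ^+ k / (k`!)%:R.

Lemma poisson_ge0 m k : 0 <= m -> 0 <= poisson m k.
Proof. by move=> m0; rewrite /poisson !mulr_ge0 ?expR_ge0 ?exprn_ge0 // invr_ge0. Qed.

Lemma exp_eseries (x : R) :
  (\sum_(i <oo) (x ^+ i / (i`!)%:R)%:E = (expR x)%:E)%E.
Proof.
rewrite /expR -EFin_lim; last exact: is_cvg_series_exp_coeff.
by apply: congr_lim; apply/funext => N; rewrite /series /= sumEFin.
Qed.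

Lemma poisson_sum (m : R) : 0 <= m -> (\sum_(l <oo) (poisson m l)%:E = 1)%E.
Proof.
move=> m0; rewrite /poisson.
under eq_eseriesr => i _ do rewrite -mulrA EFinM.
rewrite nneseriesZl; last by move=> i _; rewrite lee_fin divr_ge0 ?exprn_ge0.
by rewrite exp_eseries -EFinM -expRD addNr expR0.
Qed.

(* P[Poi(m) = l + k'] / P[Poi(cm) = k'], up to the binomial factor: the
   conditional weight of l unlabelled draws given k' labelled ones. *)
Definition split_ratio (c m : R) (k' l : nat) : R :=
  expR (- ((1 - c) * m)) * m ^+ l / ((l`!)%:R * ('C(l + k', k'))%:R * c ^+ k').

Lemma split_ratio_ge0 c m k' l : 0 < c -> 0 <= m -> 0 <= split_ratio c m k' l.
Proof.
move=> c0 m0.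
by rewrite /split_ratio mulr_ge0 ?invr_ge0 ?mulr_ge0 ?expR_ge0 ?exprn_ge0 // ltW.
Qed.

(* Poisson splitting, in the form needed to condition on the labels. *)
Lemma poisson_split c m k' l : 0 < c ->
  poisson m (l + k') = poisson (c * m) k' * split_ratio c m k' l.
Proof.
move=> c0; rewrite /poisson /split_ratio.
have -> : expR (- m) = expR (- (c * m)) * expR (- ((1 - c) * m)).
  by rewrite -expRD; congr expR; ring.
have E := bin_fact (leq_addl l k'); rewrite addnK in E.
rewrite -E !natrM.
have C0 : ('C(l + k', k'))%:R != 0 :> R.
  by rewrite pnatr_eq0 -lt0n bin_gt0 leq_addl.
have F0 : (l`!)%:R != 0 :> R by rewrite pnatr_eq0 -lt0n fact_gt0.
have F1 : (k'`!)%:R != 0 :> R by rewrite pnatr_eq0 -lt0n fact_gt0.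
have cp : c ^+ k' != 0 by rewrite expf_neq0 // gt_eqF.
by rewrite exprMn exprD; field; rewrite C0 F0 F1 cp.
Qed.

Lemma split_ratio_binomial c m k' l : 0 < c ->
  split_ratio c m k' l * ('C(l + k', k')%:R * c ^+ k' * (1 - c) ^+ l) =
  poisson ((1 - c) * m) l.
Proof.
move=> c0; rewrite /split_ratio /poisson exprMn.
have C0 : ('C(l + k', k'))%:R != 0 :> R.
  by rewrite pnatr_eq0 -lt0n bin_gt0 leq_addl.
have F0 : (l`!)%:R != 0 :> R by rewrite pnatr_eq0 -lt0n fact_gt0.
have cp : c ^+ k' != 0 by rewrite expf_neq0 // gt_eqF.
by field; rewrite C0 F0 cp.
Qed.

End Poisson.

Section Simulation.
Variables (R : realType) (n r : nat) (f : 'I_n -> R) (h : 'I_r -> 'I_n -> R)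
  (c m : R) (T : tester R n).
Hypotheses (f_ge0 : forall i, 0 <= f i) (h_ge0 : forall j i, 0 <= h j i)
  (sum_f : \sum_i f i = 1 - c) (sum_h : forall j, \sum_i h j i = c)
  (c_gt0 : 0 < c) (c_lt1 : c < 1) (m_ge0 : 0 <= m) (T_tester : is_tester T).

Definition accept_mass k (y : seq 'I_r) : R :=
  \sum_(w : k.-tuple (sample n r) | labels w == y)
     (\prod_(x <- w) sweight f h x) * T (map_tuple (@point n r) w).

Lemma sweight_ge0 x : 0 <= sweight f h x.
Proof. by case: x => [i|[j i]] /=. Qed.

Lemma accept_mass_ge0 k y : 0 <= accept_mass k y.
Proof.
apply: sumr_ge0 => w _; apply: mulr_ge0.
  by apply: prodr_ge0 => x _; exact: sweight_ge0.
by case/andP: (T_tester (map_tuple (@point n r) w)).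
Qed.

Lemma accept_mass_le k y : accept_mass k y <= label_mass f h k y.
Proof.
apply: ler_sum => w _; apply: ler_piMr.
  by apply: prodr_ge0 => x _; exact: sweight_ge0.
by case/andP: (T_tester (map_tuple (@point n r) w)).
Qed.

Local Open Scope ereal_scope.

(* Acceptance probability of T given the labels y, averaged over the number
   of unlabelled draws; it is a probability since accept_mass <= label_mass. *)
Definition sim_series k' (y : seq 'I_r) : \bar R :=
  \sum_(l <oo) (split_ratio c m k' l * accept_mass (l + k') y)%:E.

Lemma sim_series_ge0 k' y : 0 <= sim_series k' y.
Proof.
apply: nneseries_ge0 => l _ _.
by rewrite lee_fin mulr_ge0 ?split_ratio_ge0 ?accept_mass_ge0.
Qed.

Lemma sim_series_le1 k' (y : k'.-tuple 'I_r) : sim_series k' y <= 1.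
Proof.
rewrite -(@poisson_sum _ ((1 - c) * m)%R); last by rewrite mulr_ge0 // subr_ge0 ltW.
apply: lee_nneseries.
  by move=> l _ _; rewrite lee_fin mulr_ge0 ?split_ratio_ge0 ?accept_mass_ge0.
move=> l _; rewrite -(split_ratio_binomial m k' l c_gt0) lee_fin.
apply: ler_wpM2l; first exact: split_ratio_ge0.
apply: le_trans (accept_mass_le _ _) _.
by rewrite (label_massE sum_f sum_h) size_tuple addnK.
Qed.

Lemma sim_series_fin k' (y : k'.-tuple 'I_r) : sim_series k' y \is a fin_num.
Proof.
by rewrite ge0_fin_numE ?sim_series_ge0 //; exact: le_lt_trans (sim_series_le1 y) (ltey _).
Qed.

(* The simulating tester on [r]: it only sees the labels. *)
Definition sim_tester : tester R r := fun k' (y : k'.-tuple 'I_r) => fine (sim_series k' y).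

Lemma sim_tester_valid : is_tester sim_tester.
Proof.
move=> k' y; rewrite /sim_tester fine_ge0 ?sim_series_ge0 //=.
by rewrite -lee_fin fineK ?sim_series_fin ?sim_series_le1.
Qed.

Lemma sim_testerE k' (y : k'.-tuple 'I_r) : (sim_tester y)%:E = sim_series k' y.
Proof. by rewrite /sim_tester fineK ?sim_series_fin. Qed.

Local Close Scope ereal_scope.

Variable p' : 'I_r -> R.
Hypothesis p'_ge0 : forall j, 0 <= p' j.

Lemma accept_sum_by_labels k :
  \sum_(t : k.-tuple 'I_n) (\prod_(j < k) mixture f h p' (tnth t j)) * T t =
  \sum_(k' < k.+1) \sum_(y : k'.-tuple 'I_r) (\prod_(j <- y) p' j) * accept_mass k y.
Proof.
under eq_bigr do rewrite -(big_tuple _ _ _ xpredT).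
rewrite sum_mixture_tuples.
under eq_bigr do rewrite mix_weight_prod -mulrA.
by rewrite sum_by_labels.
Qed.

Definition sim_term k' l : R :=
  poisson (c * m) k' * \sum_(y : k'.-tuple 'I_r)
    (\prod_(j <- y) p' j) * (split_ratio c m k' l * accept_mass (l + k') y).

Lemma sim_term_ge0 k' l : 0 <= sim_term k' l.
Proof.
rewrite mulr_ge0 ?poisson_ge0 ?mulr_ge0 ?(ltW c_gt0) //.
apply: sumr_ge0 => y _; apply: mulr_ge0; first by apply: prodr_ge0 => j _.
by rewrite mulr_ge0 ?split_ratio_ge0 ?accept_mass_ge0.
Qed.

(* Row k of the double series: exactly k draws in total. *)
Lemma accept_term k :
  poisson m k *
    \sum_(t : k.-tuple 'I_n) (\prod_(j < k) mixture f h p' (tnth t j)) * T t =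
  \sum_(k' < k.+1) sim_term k' (k - k').
Proof.
rewrite accept_sum_by_labels big_distrr /=; apply: eq_bigr => k' _.
have Hk : (k' <= k)%N by rewrite -ltnS.
rewrite /sim_term -[in poisson m k](subnK Hk) (poisson_split _ _ _ c_gt0) -mulrA.
congr (_ * _).
rewrite big_distrr /=; apply: eq_bigr => y _.
by rewrite subnK //; ring.
Qed.

(* Column k': exactly k' labelled draws, giving the k'-th term for sim_tester. *)
Lemma sim_term_series k' :
  (\sum_(l <oo) (sim_term k' l)%:E =
   (poisson (c * m) k' *
      \sum_(y : k'.-tuple 'I_r) (\prod_(j < k') p' (tnth y j)) * sim_tester y)%:E)%E.
Proof.
have weighted_ge0 (y : seq 'I_r) l : 0 <= split_ratio c m k' l * accept_mass (l + k') y.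
  by rewrite mulr_ge0 ?split_ratio_ge0 ?accept_mass_ge0.
have summand_ge0 (y : seq 'I_r) l :
    0 <= (\prod_(j <- y) p' j) * (split_ratio c m k' l * accept_mass (l + k') y).
  by rewrite mulr_ge0 ?weighted_ge0 //; apply: prodr_ge0.
under eq_eseriesr do rewrite EFinM.
rewrite nneseriesZl; last by move=> l _; rewrite lee_fin sumr_ge0.
rewrite [RHS]EFinM; congr (_ * _)%E.
under eq_eseriesr do rewrite -sumEFin.
rewrite nneseries_sum; last by move=> y l _; rewrite lee_fin.
rewrite -sumEFin; apply: eq_bigr => y _.
under eq_eseriesr do rewrite EFinM.
rewrite nneseriesZl; last by move=> l _; rewrite lee_fin.
by rewrite EFinM -(big_tuple _ _ _ xpredT) sim_testerE.
Qed.

Theorem sim_accept :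
  accept_prob sim_tester p' (c * m) = accept_prob T (mixture f h p') m.
Proof.
pose a k k' := if (k' <= k)%N then (sim_term k' (k - k'))%:E else 0%E.
have a_ge0 k k' : (0 <= a k k')%E.
  by rewrite /a; case: ifP; rewrite // lee_fin sim_term_ge0.
have rows k : ((expR (- m) * m ^+ k / (k`!)%:R *
      \sum_(t : k.-tuple 'I_n) (\prod_(j < k) mixture f h p' (tnth t j)) * T t)%:E
    = \sum_(k' <oo) a k k')%E.
  rewrite (nneseries_split 0 k.+1) // [X in (_ + X)%E]eseries0 ?adde0; last first.
    by move=> i; rewrite add0n => Hi _; rewrite /a leqNgt Hi.
  rewrite add0n big_mkord (eq_bigr (fun i : 'I_k.+1 => (sim_term i (k - i))%:E)).
    by rewrite sumEFin -accept_term.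
  by move=> i _; rewrite /a -ltnS ltn_ord.
rewrite /accept_prob; under [RHS]eq_eseriesr do rewrite rows.
rewrite nneseries_interchange //; apply: eq_eseriesr => k' _.
rewrite (nneseries_split 0 k') //.
have -> : (\sum_(0 <= i < 0 + k') a i k' = 0)%E.
  by rewrite big_nat_cond big1 // => i /andP[/andP[_ Hi] _]; rewrite /a leqNgt Hi.
rewrite add0e -nneseries_addn //.
under eq_eseriesr do rewrite /a leq_addl addnK.
by rewrite sim_term_series.
Qed.

End Simulation.

Section Blocks.
Variables (R : realType) (n : nat) (q : 'I_n -> R) (w M : R).
Hypotheses (w_ge0 : 0 <= w) (M_ge0 : 0 <= M).

Lemma pick_block (A : {set 'I_n}) : (forall i, i \in A -> q i <= M) ->
  w <= \sum_(i in A) q i ->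
  exists B : {set 'I_n}, [/\ B \subset A, w <= \sum_(i in B) q i &
                           \sum_(i in B) q i <= w + M].
Proof.
move=> HM; move: {2}#|A| (leqnn #|A|) => k; elim: k A HM => [|k IH] A HM Hk Hw.
  have A0 : A = finset.set0 by apply/eqP; rewrite -cards_eq0 -leqn0.
  rewrite A0 big_set0 in Hw *; exists finset.set0.
  by rewrite big_set0 subxx Hw addr_ge0.
have [le|gt] := leP (\sum_(i in A) q i) (w + M); first by exists A.
have /set0Pn[a Ha] : A != finset.set0.
  apply/eqP => A0; move: gt; rewrite A0 big_set0 => gt.
  have := addr_ge0 w_ge0 M_ge0; lra.
have HA : \sum_(i in A) q i = q a + \sum_(i in A :\ a) q i by rewrite (big_setD1 a).
have [|||B [HB1 HB2 HB3]] := IH (A :\ a).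
- by move=> i; rewrite finset.in_setD1 => /andP[_ /HM].
- by move: Hk; rewrite (cardsD1 a A) Ha add1n ltnS.
- by move: gt; rewrite HA; have := HM a Ha; lra.
by exists B; split => //; exact: fintype.subset_trans HB1 (subD1set A a).
Qed.

Lemma disjoint_blocks k (A : {set 'I_n}) : (forall i, i \in A -> q i <= M) ->
  k%:R * (w + M) <= \sum_(i in A) q i ->
  exists g : 'I_n -> nat, forall j, (j < k)%N -> w <= \sum_(i in A | g i == j) q i.
Proof.
elim: k A => [|k IH] A HM Hs; first by exists (fun _ => 0%N).
have [|B [HB1 HB2 HB3]] := pick_block HM.
  apply: le_trans Hs; have : 0 <= k%:R * (w + M) by rewrite mulr_ge0 ?addr_ge0.
  by rewrite mulrSr; have := M_ge0; lra.
have HS : \sum_(i in A) q i = \sum_(i in B) q i + \sum_(i in A :\: B) q i.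
  by rewrite (big_setID B) /=; move/finset.setIidPr: HB1 => ->.
have [||g Hg] := IH (A :\: B).
- by move=> i; rewrite finset.in_setD => /andP[_ /HM].
- by move: Hs; rewrite HS mulrSr; lra.
exists (fun i => if i \in B then 0%N else (g i).+1) => -[|j] Hj.
  rewrite (eq_bigl (fun i => i \in B)) // => i /=.
  by case: ifP => iB; rewrite ?andbT ?andbF //; exact: (fintype.subsetP HB1).
apply: le_trans (Hg j Hj) _; rewrite le_eqVlt; apply/orP; left; apply/eqP.
apply: eq_bigl => i; rewrite finset.in_setD.
by case: (i \in B) => //=; rewrite ?andbF.
Qed.

End Blocks.

(* Scaling the pieces down yields b <= q and g with block masses exactly w. *)
Lemma block_weights (R : realType) n r (q : 'I_n -> R) (S : {set 'I_n}) (w M : R) :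
  (0 < r)%N -> (forall i, 0 <= q i) -> 0 < w -> 0 <= M ->
  (forall i, i \in S -> q i <= M) -> r%:R * (w + M) <= \sum_(i in S) q i ->
  exists (g : 'I_n -> 'I_r) (b : 'I_n -> R),
    (forall i, 0 <= b i <= q i) /\ (forall j, \sum_(i | g i == j) b i = w).
Proof.
move=> r_gt0 q_ge0 w_gt0 M_ge0 HM Hs.
have [g0 Hg0] := disjoint_blocks (ltW w_gt0) M_ge0 HM Hs.
pose mass (j : nat) := \sum_(i in S | g0 i == j) q i.
have mass_gt0 j : (j < r)%N -> 0 < mass j by move=> /Hg0; exact: lt_le_trans.
exists (fun i => insubd (Ordinal r_gt0) (g0 i)).
exists (fun i => if (i \in S) && (g0 i < r)%N then q i * (w / mass (g0 i)) else 0).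
split.
  move=> i; case: ifP => [/andP[iS ir]|_]; last by rewrite lexx q_ge0.
  have := mass_gt0 _ ir => mpos.
  rewrite mulr_ge0 ?q_ge0 ?divr_ge0 ?(ltW w_gt0) ?(ltW mpos) //=.
  by rewrite ler_piMr ?q_ge0 // ler_pdivrMr // mul1r Hg0.
move=> j; have mpos := mass_gt0 _ (ltn_ord j).
transitivity (\sum_(i in S | g0 i == j) q i * (w / mass j)); last first.
  by rewrite -big_distrl /= -/(mass j) mulrCA mulfV ?mulr1 // gt_eqF.
rewrite big_mkcond [RHS]big_mkcond /=; apply: eq_bigr => i _.
case iS: (i \in S) => /=; last by case: ifP.
have [ir|ir] := ltnP (g0 i) r.
  by rewrite -val_eqE /= val_insubd ir; case: eqP => // ->.
rewrite if_same; case: eqP => // E.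
by move: (ltn_ord j); rewrite -E ltnNge ir.
Qed.

Section Embedding.
Variables (R : realType) (n r : nat) (q : 'I_n -> R) (g : 'I_n -> 'I_r)
  (b : 'I_n -> R) (c : R).
Hypotheses (q_distr : is_distr q) (r_gt0 : (0 < r)%N)
  (b_bound : forall i, 0 <= b i <= q i)
  (block_mass : forall j, \sum_(i | g i == j) b i = c / r%:R).

Definition rest (i : 'I_n) : R := q i - b i.

Definition block (j : 'I_r) (i : 'I_n) : R := if g i == j then r%:R * b i else 0.

Definition embed (p' : 'I_r -> R) : 'I_n -> R := mixture rest block p'.

Lemma b_ge0 i : 0 <= b i. Proof. by case/andP: (b_bound i). Qed.

Lemma rest_ge0 i : 0 <= rest i.
Proof. by rewrite subr_ge0; case/andP: (b_bound i). Qed.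

Lemma block_ge0 j i : 0 <= block j i.
Proof. by rewrite /block; case: ifP => // _; rewrite mulr_ge0 ?ler0n ?b_ge0. Qed.

Lemma r_neq0 : r%:R != 0 :> R. Proof. by rewrite pnatr_eq0 -lt0n. Qed.

Lemma sum_b : \sum_i b i = c.
Proof.
rewrite (partition_big g xpredT) //= (eq_bigr _ (fun j _ => block_mass j)).
by rewrite sumr_const card_ord -[_ *+ r]mulr_natr divfK ?r_neq0.
Qed.

Lemma sum_rest : \sum_i rest i = 1 - c.
Proof. by rewrite /rest sumrB sum_b; case: q_distr => _ ->. Qed.

Lemma sum_block j : \sum_i block j i = c.
Proof.
by rewrite /block -big_mkcond /= -big_distrr /= block_mass mulrCA mulfV ?mulr1 ?r_neq0.
Qed.

Lemma embedE p' i : embed p' i = q i - b i + r%:R * b i * p' (g i).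
Proof.
rewrite /embed mixtureE; congr (_ + _).
rewrite (bigD1 (g i)) //= /block eqxx [X in _ + X]big1 ?addr0; first by rewrite mulrC.
by move=> j Hj; rewrite eq_sym (negbTE Hj) mulr0.
Qed.

Lemma embed_distr p' : is_distr p' -> is_distr (embed p').
Proof.
move=> [p'_ge0 p'_sum1]; split=> [i|].
  by rewrite embedE addr_ge0 ?rest_ge0 // !mulr_ge0 ?ler0n ?p'_ge0 ?b_ge0.
under eq_bigr do rewrite embedE.
have [_ q_sum1] := q_distr.
rewrite big_split /= sumrB q_sum1 sum_b (partition_big g xpredT) //=.
transitivity (1 - c + \sum_(j < r) c * p' j); last first.
  by rewrite -big_distrr /= p'_sum1 mulr1 subrK.
congr (_ + _); apply: eq_bigr => j _.
transitivity (\sum_(i | g i == j) r%:R * p' j * b i).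
  by apply: eq_bigr => i /eqP ->; ring.
by rewrite -big_distrr /= block_mass; field; rewrite r_neq0.
Qed.

Lemma embed_l1dist p' : l1dist (embed p') q = c * l1dist p' (@unif R r).
Proof.
rewrite /l1dist big_distrr /= (partition_big g xpredT) //=.
apply: eq_bigr => j _.
transitivity (\sum_(i | g i == j) b i * `|r%:R * p' j - 1|).
  apply: eq_bigr => i /eqP <-; rewrite embedE.
  have -> : q i - b i + r%:R * b i * p' (g i) - q i = b i * (r%:R * p' (g i) - 1).
    by ring.
  by rewrite normrM ger0_norm ?b_ge0.
rewrite -big_distrl /= block_mass /unif.
have -> : r%:R * p' j - 1 = r%:R * (p' j - 1 / r%:R) by field; rewrite r_neq0.
by rewrite normrM ger0_norm ?ler0n //; field; rewrite r_neq0.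
Qed.

Lemma solves_embedded e1 e2 d m : 0 < c -> c < 1 -> 0 <= m ->
  solves q e1 e2 d m -> solves (@unif R r) (e1 / c) (e2 / c) d (c * m).
Proof.
move=> c_gt0 c_lt1 m_ge0 [T [T_tester T_correct]].
exists (sim_tester rest block c m T); split.
  exact: (sim_tester_valid rest_ge0 block_ge0 sum_rest sum_block).
move=> p' p'_distr.
rewrite (sim_accept rest_ge0 block_ge0 sum_rest sum_block) //; last by case: p'_distr.
have [close far] := T_correct _ (embed_distr p'_distr).
have scale e : (l1dist p' (@unif R r) <= e / c) = (l1dist (embed p') q <= e).
  by rewrite embed_l1dist ler_pdivlMr // mulrC.
have scale' e : (e / c <= l1dist p' (@unif R r)) = (e <= l1dist (embed p') q).
  by rewrite embed_l1dist ler_pdivrMr // mulrC.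
by split=> [/[!scale] /close | /[!scale'] /far].
Qed.

End Embedding.

Section Reduction.
Variables (R : realType) (n : nat) (q : 'I_n -> R) (S : {set 'I_n}).
Hypothesis q_distr : is_distr q.

Lemma qmax_ge0 : 0 <= qmax q S.
Proof.
rewrite /qmax; elim/big_ind: _ => // [x y x0 y0 | i _]; first by rewrite le_max x0.
by case: q_distr.
Qed.

Lemma qmax_ub i : i \in S -> q i <= qmax q S.
Proof. exact: le_bigmax_cond. Qed.

Lemma qmass_le1 : qmass q S <= 1.
Proof.
have [q_ge0 <-] := q_distr.
by rewrite [X in _ <= X](bigID (fun i => i \in S)) /= lerDl sumr_ge0.
Qed.

Hypothesis Rqs_ge1 : (1 <= Rqs q S)%N.

Lemma qmax_gt0 : 0 < qmax q S.
Proof.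
have : 1 <= qmass q S / (2 * qmax q S) by rewrite -truncn_gt0.
rewrite lt_def qmax_ge0 andbT; apply: contraTneq => ->.
by rewrite mulr0 invr0 mulr0 ler10.
Qed.

(* r blocks of mass 2M fit into S; this is what makes the reduction possible. *)
Lemma Rqs_blocks_fit : (Rqs q S)%:R * (2 * qmax q S) <= qmass q S.
Proof.
have qmass_ge0 : 0 <= qmass q S by apply: sumr_ge0 => i _; case: q_distr.
rewrite -ler_pdivlMr ?mulr_gt0 ?qmax_gt0 //.
by rewrite /Rqs truncn_le divr_ge0 // mulr_ge0 ?qmax_ge0.
Qed.

Lemma qmass_gt0 : 0 < qmass q S.
Proof.
apply: lt_le_trans Rqs_blocks_fit.
by rewrite mulr_gt0 ?ltr0n ?mulr_gt0 ?qmax_gt0.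
Qed.

Lemma reduction e1 e2 d m : 0 <= m -> solves q e1 e2 d m ->
  solves (@unif R (Rqs q S)) (4 * e1 / qmass q S) (4 * e2 / qmass q S) d
         (qmass q S / 4 * m).
Proof.
move=> m_ge0 Hsolves.
have [q_ge0 _] := q_distr.
set r := Rqs q S; set M := qmax q S; set c := qmass q S / 4.
have c_gt0 : 0 < c by rewrite divr_gt0 ?qmass_gt0.
have c_lt1 : c < 1 by have := qmass_le1; rewrite /c; lra.
have r_gt0 : 0 < r%:R :> R by rewrite ltr0n.
have fit : r%:R * (c / r%:R + M) <= \sum_(i in S) q i.
  rewrite mulrDr mulrCA mulfV ?gt_eqF // mulr1.
  have := qmass_gt0; have := Rqs_blocks_fit; rewrite -/r -/M /c /qmass; lra.
have [g [b [b_bound block_mass]]] :=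
  block_weights Rqs_ge1 q_ge0 (divr_gt0 c_gt0 r_gt0) qmax_ge0 qmax_ub fit.
have := solves_embedded q_distr Rqs_ge1 b_bound block_mass c_gt0 c_lt1 m_ge0 Hsolves.
have scale e : e / c = 4 * e / qmass q S.
  by rewrite /c; field; rewrite gt_eqF ?qmass_gt0.
by rewrite !scale.
Qed.

End Reduction.

Unset Implicit Arguments. Set Strict Implicit.

Theorem theoremC1 (R : realType) (n : nat) (q : 'I_n -> R) (S : {set 'I_n})
    (e1 e2 d : R) :
  is_distr q -> S != finset.set0 -> (1 <= Rqs q S)%N ->
  0 <= e1 -> e1 < e2 -> 0 < d ->
  (((4 / qmass q S)%:E *
     SC (@unif R (Rqs q S)) (4 * e1 / qmass q S) (4 * e2 / qmass q S) d)
   <= SC q e1 e2 d)%E.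
Proof.
move=> q_distr _ Rqs_ge1 _ _ _.
have qS_gt0 := qmass_gt0 q_distr Rqs_ge1.
apply: le_ereal_inf_tmp => _ [m [m_ge0 Hm] <-].
have SC_unif_le : (SC (@unif R (Rqs q S)) (4 * e1 / qmass q S) (4 * e2 / qmass q S) d
                   <= (qmass q S / 4 * m)%:E)%E.
  apply: ge_ereal_inf; exists (qmass q S / 4 * m)%:E => //.
  exists (qmass q S / 4 * m) => //; split.
    by rewrite mulr_ge0 // divr_ge0 // ltW.
  exact: reduction.
apply: le_trans (lee_wpmul2l _ SC_unif_le) _.
  by rewrite lee_fin divr_ge0 // ltW.
rewrite -EFinM lee_fin le_eqVlt; apply/orP; left; apply/eqP.
by field; rewrite gt_eqF.
Qed.
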